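(* Let $d \ge 2$ and $\lambda > 0$. Consider the TransE model, in which each entity $e$ is assigned a vector $\vec{e} \in \mathbb{R}^d$ and each relation $r$ a vector $\vec{r} \in \mathbb{R}^d$, and declare a fact $(e_1, r, e_2)$ valid, i.e. $(e_1,r,e_2) \in P$, if and only if $\|\vec{e_1} + \vec{r} - \vec{e_2}\| \le \lambda$ (Euclidean norm). Then none of the following three implications holds for all TransE embeddings: (R1) if $r$ is reflexive on a set $\Delta$ of entities, then $r$ is symmetric on $\Delta$; (R2) if $r$ is reflexive on a set $\Delta$ of entities, then $r$ is transitive on $\Delta$; (R3) if an entity $e_1$ has relation $r$ with every entity in a set $\Delta$ of entities and an entity $e_2$ has relation $r$ with one of the entities in $\Delta$, then $e_2$ has relation $r$ with every entity in $\Delta$. That is, for each of (R1), (R2), (R3) there exist entity vectors and a relation vector in $\mathbb{R}^d$ such that, with $P$ defined by the threshold $\lambda$, the hypothesis of the implication is satisfied but its conclusion fails.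
   Context: A relation $r$ is reflexive on a set $E$ of entities if $(e,r,e) \in P$ for all $e \in E$; symmetric on $E$ if $(e_1,r,e_2)\in P \iff (e_2,r,e_1)\in P$ for all $e_1,e_2 \in E$; transitive on $E$ if $(e_1,r,e_2)\in P$ and $(e_2,r,e_3)\in P$ imply $(e_1,r,e_3)\in P$ for all $e_1,e_2,e_3 \in E$. The TransE implausibility score of a fact $(s,r,o)$ is $\|\vec{s}+\vec{r}-\vec{o}\|$. *)

From HB Require Import structures.
From mathcomp Require Import all_boot all_order all_algebra.
From mathcomp Require Import reals.
Set Implicit Arguments. Unset Strict Implicit. Unset Printing Implicit Defensive.
Import Order.TTheory GRing.Theory Num.Theory.
Local Open Scope ring_scope.

Definition eucl_norm (R : realType) (d : nat) (v : 'rV[R]_d) : R :=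
  Num.sqrt (\sum_(i < d) v ord0 i ^+ 2).

Definition transE_valid (R : realType) (d : nat) (E : Type) (lambda : R)
  (emb : E -> 'rV[R]_d) (r : 'rV[R]_d) (e1 e2 : E) : Prop :=
  eucl_norm (emb e1 + r - emb e2) <= lambda.

Definition reflexive_on (E : Type) (P : E -> E -> Prop) (D : E -> Prop) : Prop :=
  forall e, D e -> P e e.
Definition symmetric_on (E : Type) (P : E -> E -> Prop) (D : E -> Prop) : Prop :=
  forall e1 e2, D e1 -> D e2 -> (P e1 e2 <-> P e2 e1).
Definition transitive_on (E : Type) (P : E -> E -> Prop) (D : E -> Prop) : Prop :=
  forall e1 e2 e3, D e1 -> D e2 -> D e3 -> P e1 e2 -> P e2 e3 -> P e1 e3.

From HB Require Import structures.
From mathcomp Require Import all_boot all_order all_algebra.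
From mathcomp Require Import reals.
From mathcomp Require Import ring zify.
Set Implicit Arguments. Unset Strict Implicit. Unset Printing Implicit Defensive.
Import Order.TTheory GRing.Theory Num.Theory.
Local Open Scope ring_scope.

(* Put entity k at 2 k lambda u and the relation at lambda u for a unit vector
   u.  Then e_i + r - e_j = (2 (i - j) + 1) lambda u, so (i, r, j) is valid
   exactly when j is i or i + 1.  This successor-or-equal relation is
   reflexive but neither symmetric nor transitive, and on {0, 1} the entity 0
   is related to everything while 1 is related to 1 but not to 0.  Only one
   coordinate is used, so d >= 1 would suffice. *)

Lemma ler_norm_natB1 (R : realDomainType) (i j : nat) :
  (`|i%:R - j%:R| <= 1 :> R) = (j <= i.+1)%N && (i <= j.+1)%N.
Proof. by rewrite ler_norml lerBrDl !lerBlDr natr1 nat1r !ler_nat. Qed.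

Section EuclideanNorm.
Variables (R : realType) (d : nat).

Lemma eucl_normZ (a : R) (v : 'rV[R]_d) :
  eucl_norm (a *: v) = `|a| * eucl_norm v.
Proof.
rewrite /eucl_norm -sqrtr_sqr -sqrtrM ?sqr_ge0 // mulr_sumr.
by congr Num.sqrt; apply: eq_bigr => i _; rewrite mxE exprMn.
Qed.

Lemma eucl_norm_delta (j : 'I_d) : eucl_norm (delta_mx 0 j : 'rV[R]_d) = 1.
Proof.
rewrite /eucl_norm (bigD1 j) //= big1 ?addr0 => [|i neq_ij].
  by rewrite mxE !eqxx expr1n sqrtr1.
by rewrite mxE (negPf neq_ij) andbF expr0n.
Qed.

End EuclideanNorm.

Section ChainEmbedding.
Variables (R : realType) (d : nat) (lambda : R) (u : 'rV[R]_d).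
Hypotheses (lambda_gt0 : 0 < lambda) (u_unit : eucl_norm u = 1).

Definition chain_emb (k : nat) : 'rV[R]_d := ((2 * k)%:R * lambda) *: u.

Lemma transE_valid_chain (i j : nat) :
  transE_valid lambda chain_emb (lambda *: u) i j <-> (i <= j <= i.+1)%N.
Proof.
rewrite /transE_valid.
have -> : chain_emb i + lambda *: u - chain_emb j
          = (lambda * ((2 * i).+1%:R - (2 * j)%:R)) *: u.
  rewrite /chain_emb -scalerDl -scalerBl -[(2 * i).+1]addn1; congr (_ *: _).
  by rewrite natrD !natrM; ring.
rewrite eucl_normZ u_unit mulr1 normrM gtr0_norm //.
rewrite ger_pMr // ler_norm_natB1.
by split => /andP[? ?]; apply/andP; split; lia.
Qed.

End ChainEmbedding.

Section SuccessorOrEqual.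
Variable P : 'I_3 -> 'I_3 -> Prop.
Hypothesis P_succ : forall i j : 'I_3, P i j <-> (i <= j <= i.+1)%N.

Let e0 := @Ordinal 3 0 isT.
Let e1 := @Ordinal 3 1 isT.
Let e2 := @Ordinal 3 2 isT.

Lemma reflexive_on_succ (D : 'I_3 -> Prop) : reflexive_on P D.
Proof. by move=> i _; apply/P_succ; rewrite leqnn leqnSn. Qed.

Lemma not_symmetric_on_succ : ~ symmetric_on P (fun _ => True).
Proof.
have P01 : P e0 e1 by apply/P_succ.
by case/(_ e0 e1 I I) => /(_ P01)/P_succ.
Qed.

Lemma not_transitive_on_succ : ~ transitive_on P (fun _ => True).
Proof.
have P01 : P e0 e1 by apply/P_succ.
have P12 : P e1 e2 by apply/P_succ.
by move/(_ e0 e1 e2 I I I P01 P12)/P_succ.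
Qed.

Lemma not_uniform_on_succ :
  exists (D : 'I_3 -> Prop) (a b : 'I_3),
    (forall e, D e -> P a e) /\ (exists e, D e /\ P b e) /\ ~ (forall e, D e -> P b e).
Proof.
exists (fun e : 'I_3 => (e <= 1)%N), e0, e1.
split; [|split].
- by move=> e De; apply/P_succ.
- by exists e1; split=> //; apply/P_succ.
- by move/(_ e0 isT)/P_succ.
Qed.

End SuccessorOrEqual.

Theorem lemma1 (R : realType) (d : nat) (lambda : R) :
  (2 <= d)%N -> 0 < lambda ->
  (* (R1) fails *)
  (exists (n : nat) (emb : 'I_n -> 'rV[R]_d) (r : 'rV[R]_d) (D : 'I_n -> Prop),
      reflexive_on (transE_valid lambda emb r) D /\
      ~ symmetric_on (transE_valid lambda emb r) D) /\
  (* (R2) fails *)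
  (exists (n : nat) (emb : 'I_n -> 'rV[R]_d) (r : 'rV[R]_d) (D : 'I_n -> Prop),
      reflexive_on (transE_valid lambda emb r) D /\
      ~ transitive_on (transE_valid lambda emb r) D) /\
  (* (R3) fails *)
  (exists (n : nat) (emb : 'I_n -> 'rV[R]_d) (r : 'rV[R]_d) (D : 'I_n -> Prop)
          (e1 e2 : 'I_n),
      (forall e, D e -> transE_valid lambda emb r e1 e) /\
      (exists e, D e /\ transE_valid lambda emb r e2 e) /\
      ~ (forall e, D e -> transE_valid lambda emb r e2 e)).
Proof.
move=> d_ge2 lambda_gt0.
pose u : 'rV[R]_d := delta_mx 0 (Ordinal (ltnW d_ge2)).
pose emb (k : 'I_3) := chain_emb lambda u k.
have P_succ (i j : 'I_3) :
    transE_valid lambda emb (lambda *: u) i j <-> (i <= j <= i.+1)%N.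
  exact: (transE_valid_chain lambda_gt0 (eucl_norm_delta _ _)).
have [D [a [b R3]]] := not_uniform_on_succ P_succ.
split; [|split].
- exists 3, emb, (lambda *: u), (fun _ => True).
  by split; [apply: reflexive_on_succ | apply: not_symmetric_on_succ].
- exists 3, emb, (lambda *: u), (fun _ => True).
  by split; [apply: reflexive_on_succ | apply: not_transitive_on_succ].
- by exists 3, emb, (lambda *: u), D, a, b.
Qed.
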